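(* Let $\mathcal{X}\subseteq\mathbb{R}^d$ be a set such that $\operatorname{cl}\operatorname{conv}(\mathcal{X})$ is a polyhedron. Then the enhanced separation oracle (described in the context), run on any point $\bar x\in\mathbb{R}^d$, the set $\mathcal{X}$, a tolerance $\epsilon$, stored sets $V,R$, and optionally a vector $c$, terminates in a finite number of steps.
   Context: The enhanced separation oracle has access to an oracle optimizing linear functions over $\mathcal{X}$ (returning, when the maximum is finite, an optimal solution that is an extreme point (vertex) of $\operatorname{cl}\operatorname{conv}(\mathcal{X})$, and, when unbounded, an extreme ray of $\operatorname{cl}\operatorname{conv}(\mathcal{X})$ along which the objective increases). It keeps a finite set $V$ of vertices and a finite set $R$ of extreme rays of $\operatorname{cl}\operatorname{conv}(\mathcal{X})$. Procedure: (1) If $c$ is given, compute $\tilde x\in\arg\min\{c^\top x:x\in\mathcal{X}\}$ and $\bar z=c^\top\tilde x$; if $c^\top\bar x<\bar z$ return ''no'' and the cut $-c^\top x\le-\bar z$; if $\|\bar x-\tilde x\|<\epsilon$ return ''yes'' with $V=\{\bar x\}$, $\alpha=(1)$. (2) Repeat: let $\mathcal{W}=\operatorname{conv}(V)+\operatorname{cone}(R)$ and solve the linear program $\max_{\pi,\pi_0,\tau_1\ge0,\tau_2\ge0}\ \bar x^\top\pi-\pi_0$ subject to $\pi^\top v-\pi_0\le0$ for all $v\in V$, $\pi^\top r\le0$ for all $r\in R$, $\pi+\tau_1-\tau_2=0$, $\tau_1+\tau_2=1$ (componentwise/sum conventions normalizing $\|\pi\|_1=1$). If its optimal value is $0$ (up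 to $\epsilon$), i.e. $\bar x\in\mathcal{W}$, return ''yes'' with $(V,R)$ and the dual multipliers $\alpha,\beta$ of the vertex and ray constraints. Otherwise, with optimal $(\bar\pi,\bar\pi_0)$, solve $\max\{\bar\pi^\top x:x\in\mathcal{X}\}$: if it is unbounded, add to $R$ an extreme ray $r$ returned by the oracle; if it has an optimal solution $\nu$, then if $\bar\pi^\top\nu<\bar\pi^\top\bar x$ return ''no'' and the cut $\bar\pi^\top x\le\bar\pi^\top\nu$, else add $\nu$ to $V$. *)

From mathcomp Require Import all_boot all_order all_algebra.
From mathcomp Require Import reals.
Set Implicit Arguments. Unset Strict Implicit. Unset Printing Implicit Defensive.
Import Order.TTheory GRing.Theory Num.Theory.
Local Open Scope ring_scope.

Section Defs.
Variables (R : realType) (d : nat).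
Notation vec := 'rV[R]_d.

Definition dotv (u v : vec) : R := \sum_(i < d) u ord0 i * v ord0 i.

Definition enorm (u : vec) : R := Num.sqrt (dotv u u).

Definition conv_hull (X : vec -> Prop) : vec -> Prop := fun x =>
  exists n (p : 'I_n -> vec) (w : 'I_n -> R),
    (forall i, X (p i)) /\ (forall i, 0 <= w i) /\
    \sum_(i < n) w i = 1 /\ x = \sum_(i < n) w i *: p i.

Definition closure_set (S : vec -> Prop) : vec -> Prop := fun x =>
  forall e : R, 0 < e -> exists y, S y /\ forall i, `|x ord0 i - y ord0 i| < e.

Definition clconv (X : vec -> Prop) : vec -> Prop := closure_set (conv_hull X).

Definition polyhedron (P : vec -> Prop) : Prop :=
  exists m (A : 'M[R]_(m, d)) (b : 'cV[R]_m),
    forall x, P x <-> forall i, (A *m x^T) i ord0 <= b i ord0.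

Definition is_vertex (C : vec -> Prop) (v : vec) : Prop :=
  C v /\ forall y z (t : R), C y -> C z -> 0 < t < 1 ->
    v = t *: y + (1 - t) *: z -> y = z.

Definition rec_cone (C : vec -> Prop) : vec -> Prop := fun r =>
  forall x, C x -> forall t : R, 0 <= t -> C (x + t *: r).

Definition is_extreme_ray (C : vec -> Prop) (r : vec) : Prop :=
  r != 0 /\ rec_cone C r /\
  forall a b, rec_cone C a -> rec_cone C b -> r = a + b ->
    exists la lb : R, 0 <= la /\ 0 <= lb /\ a = la *: r /\ b = lb *: r.

Definition sep_lp_feasible (V Rs : seq vec) (pi : vec) (pi0 : R) (t1 t2 : vec) : Prop :=
  (forall v, v \in V -> dotv pi v - pi0 <= 0) /\
  (forall r, r \in Rs -> dotv pi r <= 0) /\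
  (forall i, 0 <= t1 ord0 i /\ 0 <= t2 ord0 i) /\
  pi + t1 - t2 = 0 /\
  \sum_(i < d) (t1 ord0 i + t2 ord0 i) = 1.

Definition sep_lp_optimal (xbar : vec) (V Rs : seq vec) (pi : vec) (pi0 : R) (t1 t2 : vec) : Prop :=
  sep_lp_feasible V Rs pi pi0 t1 t2 /\
  forall pi' pi0' t1' t2', sep_lp_feasible V Rs pi' pi0' t1' t2' ->
    dotv xbar pi' - pi0' <= dotv xbar pi - pi0.

Inductive sep_state : Type :=
  | SepInit : sep_state
  | SepLoop : seq vec -> seq vec -> sep_state
  | SepDone : sep_state.

(* one step of the procedure; all admissible choices of the LP solver and of
   the linear optimization oracle over X are allowed (nondeterminism) *)
Inductive sep_step (X : vec -> Prop) (xbar : vec) (eps : R) (V0 R0 : seq vec)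
    (c : option vec) : sep_state -> sep_state -> Prop :=
  | step_init_noc : c = None -> sep_step X xbar eps V0 R0 c SepInit (SepLoop V0 R0)
  | step_init_cut : forall cv xt, c = Some cv -> X xt ->
      (forall y, X y -> dotv cv xt <= dotv cv y) ->
      dotv cv xbar < dotv cv xt ->
      sep_step X xbar eps V0 R0 c SepInit SepDone
  | step_init_close : forall cv xt, c = Some cv -> X xt ->
      (forall y, X y -> dotv cv xt <= dotv cv y) ->
      ~ (dotv cv xbar < dotv cv xt) -> enorm (xbar - xt) < eps ->
      sep_step X xbar eps V0 R0 c SepInit SepDone
  | step_init_go : forall cv xt, c = Some cv -> X xt ->
      (forall y, X y -> dotv cv xt <= dotv cv y) ->
      ~ (dotv cv xbar < dotv cv xt) -> ~ (enorm (xbar - xt) < eps) ->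
      sep_step X xbar eps V0 R0 c SepInit (SepLoop V0 R0)
  | step_yes : forall V Rs pi pi0 t1 t2,
      sep_lp_optimal xbar V Rs pi pi0 t1 t2 -> dotv xbar pi - pi0 <= eps ->
      sep_step X xbar eps V0 R0 c (SepLoop V Rs) SepDone
  | step_ray : forall V Rs pi pi0 t1 t2 r,
      sep_lp_optimal xbar V Rs pi pi0 t1 t2 -> eps < dotv xbar pi - pi0 ->
      (forall M : R, exists y, X y /\ M < dotv pi y) ->
      is_extreme_ray (clconv X) r -> 0 < dotv pi r ->
      sep_step X xbar eps V0 R0 c (SepLoop V Rs) (SepLoop V (rcons Rs r))
  | step_no : forall V Rs pi pi0 t1 t2 nu,
      sep_lp_optimal xbar V Rs pi pi0 t1 t2 -> eps < dotv xbar pi - pi0 ->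
      is_vertex (clconv X) nu -> (forall y, X y -> dotv pi y <= dotv pi nu) ->
      dotv pi nu < dotv pi xbar ->
      sep_step X xbar eps V0 R0 c (SepLoop V Rs) SepDone
  | step_vertex : forall V Rs pi pi0 t1 t2 nu,
      sep_lp_optimal xbar V Rs pi pi0 t1 t2 -> eps < dotv xbar pi - pi0 ->
      is_vertex (clconv X) nu -> (forall y, X y -> dotv pi y <= dotv pi nu) ->
      ~ (dotv pi nu < dotv pi xbar) ->
      sep_step X xbar eps V0 R0 c (SepLoop V Rs) (SepLoop (rcons V nu) Rs).

End Defs.

From mathcomp Require Import all_boot all_order all_algebra.
From mathcomp Require Import reals ring lra.
Set Implicit Arguments. Unset Strict Implicit. Unset Printing Implicit Defensive.
Import Order.TTheory GRing.Theory Num.Theory.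
Local Open Scope ring_scope.

(* Write cl conv X = {x | A x <= b}.  A vertex of this polyhedron is determined
   by its set of tight rows, and an extreme ray, up to a positive factor, by its
   set of rows vanishing on it: otherwise a small perturbation along the
   difference would split it.  The vertex or ray added by an iteration of the
   loop violates the current LP cut, which all stored vertices and rays satisfy,
   so its tight set is new.  The number of distinct tight sets therefore grows
   at every iteration, but it cannot exceed 2 * 2^m. *)

Lemma card_rcons_notin (T : finType) (s : seq T) x :
  x \notin s -> #|rcons s x| = #|s|.+1.
Proof.
move=> xs; rewrite (eq_card (mem_rcons s x)) (@eq_card _ _ [predU1 x & s]) //.
by rewrite cardU1 xs.
Qed.

Lemma exists_pos_scale_le (R : numFieldType) (I : finType) (s g : I -> R) :
  (forall i, 0 <= s i) -> (forall i, s i = 0 -> g i = 0) ->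
  exists2 t : R, 0 < t & forall i, t * `|g i| <= s i.
Proof.
move=> s_ge0 sg.
pose S := \sum_i `|g i| / s i.
have S_ge0 : 0 <= S by apply: sumr_ge0 => i _; apply: divr_ge0.
exists (1 + S)^-1; first by rewrite invr_gt0 ltr_wpDr.
move=> i; have [si0|si_neq0] := eqVneq (s i) 0.
  by rewrite si0 (sg _ si0) normr0 mulr0.
have si_gt0 : 0 < s i by rewrite lt0r si_neq0 s_ge0.
rewrite mulrC ler_pdivrMr ?ltr_wpDr // mulrC -ler_pdivrMr //.
have le_S : `|g i| / s i <= S.
  by rewrite /S (bigD1 i) //= lerDl; apply: sumr_ge0 => j _; apply: divr_ge0.
by apply: (le_trans le_S); rewrite lerDr.
Qed.

Section Inequalities.
Variables (R : realType) (d m : nat) (A : 'M[R]_(m, d)).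
Implicit Types (b : 'I_m -> R) (x u v : 'rV[R]_d).

Definition lhs i x : R := (A *m x^T) i ord0.
Definition feasible b x := forall i, lhs i x <= b i.
Definition tight b x : {set 'I_m} := [set i | lhs i x == b i].

Lemma lhsD i x y : lhs i (x + y) = lhs i x + lhs i y.
Proof. by rewrite /lhs linearD /= mulmxDr mxE. Qed.

Lemma lhsZ i k x : lhs i (k *: x) = k * lhs i x.
Proof. by rewrite /lhs linearZ /= -scalemxAr mxE. Qed.

Lemma lhsB i x y : lhs i (x - y) = lhs i x - lhs i y.
Proof. by rewrite /lhs raddfB /= mulmxBr !mxE. Qed.

Lemma feasible_perturb b v u :
  feasible b v -> tight b v \subset tight (fun=> 0) u ->
  exists2 t, 0 < t & forall k, `|k| <= t -> feasible b (v + k *: u).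
Proof.
move=> fv /subsetP vu.
have [t t_gt0 tle] : exists2 t, 0 < t & forall i, t * `|lhs i u| <= b i - lhs i v.
  apply: exists_pos_scale_le => i; first by rewrite subr_ge0.
  move/eqP; rewrite subr_eq0 eq_sym => vi.
  by have := vu i; rewrite !inE vi => /(_ isT)/eqP.
exists t => // k kt i; rewrite lhsD lhsZ -lerBrDl.
apply: le_trans (tle i); rewrite (le_trans (ler_norm _)) // normrM.
by rewrite ler_wpM2r.
Qed.

End Inequalities.

Notation tight0 A := (tight A (fun=> 0)).

Section Polyhedron.
Variables (R : realType) (d m : nat) (A : 'M[R]_(m, d)) (b : 'I_m -> R).
Variable P : 'rV[R]_d -> Prop.
Hypothesis PE : forall x, P x <-> feasible A b x.

Lemma vertex_eq_of_tight_eq v w :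
  is_vertex P v -> is_vertex P w -> tight A b v = tight A b w -> v = w.
Proof.
move=> [/PE Pv v_extreme] [/PE Pw _] vw.
have tight_vw : tight A b v \subset tight0 A (w - v).
  apply/subsetP => i vi; have := vi; rewrite vw !inE => /eqP wi.
  by move: vi; rewrite !inE lhsB wi => /eqP ->; rewrite subrr.
have [t t_gt0 feas] := feasible_perturb Pv tight_vw.
have y_in : P (v + t *: (w - v)) by apply/PE; apply: feas; rewrite gtr0_norm.
have z_in : P (v + (- t) *: (w - v)) by apply/PE; apply: feas; rewrite normrN gtr0_norm.
have half : 0 < (2^-1 : R) < 1.
  by rewrite invr_gt0 ltr0n invf_lt1 ?ltr1n.
have half_half : (1 - 2^-1 : R) = 2^-1 by field.
have mid : v = 2^-1 *: (v + t *: (w - v)) + (1 - 2^-1) *: (v + (- t) *: (w - v)).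
  rewrite half_half -scalerDr scaleNr addrACA subrr addr0 -mulr2n -scaler_nat.
  by rewrite scalerA mulVf ?scale1r // pnatr_eq0.
move/addrI/eqP: (v_extreme _ _ _ y_in z_in half mid).
rewrite scaleNr -subr_eq0 opprK -scalerDl scaler_eq0 (gt_eqF (addr_gt0 t_gt0 t_gt0)).
by rewrite subr_eq0 => /eqP.
Qed.

Hypothesis P_nonempty : exists x, P x.

Lemma rec_coneE a : rec_cone P a <-> feasible A (fun=> 0) a.
Proof.
split=> [a_rec i | a_feas x /PE Px t t_ge0].
  rewrite leNgt; apply/negP => ai_gt0.
  have [x0 /[dup] P_x0 /PE x0_feas] := P_nonempty.
  pose t := (b i - lhs A i x0 + 1) / lhs A i a.
  have t_ge0 : 0 <= t.
    by apply: divr_ge0 (ltW ai_gt0); apply: addr_ge0; rewrite ?subr_ge0.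
  have /PE/(_ i) := a_rec x0 P_x0 t t_ge0.
  by rewrite lhsD lhsZ mulfVK ?gt_eqF //; lra.
apply/PE => i; rewrite lhsD lhsZ (le_trans _ (Px i)) // gerDl.
by rewrite mulr_ge0_le0.
Qed.

Lemma extreme_ray_scale_of_tight_eq r s :
  is_extreme_ray P r -> is_extreme_ray P s ->
  tight0 A r = tight0 A s -> exists2 mu, 0 <= mu & s = mu *: r.
Proof.
move=> [_ [/rec_coneE r_feas r_extreme]] [_ [/rec_coneE s_feas _]] rs.
have tight_rs : tight0 A r \subset tight0 A s by rewrite rs.
have [t t_gt0 feas] := feasible_perturb r_feas tight_rs.
have rec_rts : rec_cone P (r + (- t) *: s).
  by apply/rec_coneE; apply: feas; rewrite normrN gtr0_norm.
have rec_ts : rec_cone P (t *: s).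
  by apply/rec_coneE => i; rewrite lhsZ (mulr_ge0_le0 (ltW t_gt0)).
have r_split : r = (r + (- t) *: s) + t *: s by rewrite scaleNr subrK.
have [_ [lb [_ [lb_ge0 [_ ts_eq]]]]] := r_extreme _ _ rec_rts rec_ts r_split.
exists (lb / t); first by rewrite divr_ge0 // ltW.
by rewrite -[s](scalerK (lt0r_neq0 t_gt0)) ts_eq !scalerA mulrC.
Qed.

End Polyhedron.

Lemma dotvC (R : realType) d (u v : 'rV[R]_d) : dotv u v = dotv v u.
Proof. by apply: eq_bigr => i _; rewrite mulrC. Qed.

Lemma dotvZr (R : realType) d (u v : 'rV[R]_d) k : dotv u (k *: v) = k * dotv u v.
Proof. by rewrite /dotv mulr_sumr; apply: eq_bigr => i _; rewrite mxE mulrCA. Qed.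

Lemma mem_clconv (R : realType) d (X : 'rV[R]_d -> Prop) y : X y -> clconv X y.
Proof.
move=> Xy e e_gt0; exists y; split; last by move=> i; rewrite subrr normr0.
by exists 1%N, (fun=> y), (fun=> 1); rewrite !big_ord1 scale1r.
Qed.

Lemma no_infinite_increasing_run (T : Type) (step : T -> T -> Prop)
    (inv : T -> Prop) (rank : T -> nat) (N : nat) :
  (forall x y, inv x -> step x y -> inv y /\ (rank x < rank y)%N) ->
  (forall x, (rank x <= N)%N) ->
  forall s : nat -> T, inv (s 0%N) -> ~ (forall n, step (s n) (s n.+1)).
Proof.
move=> step_rank rank_le s inv0 run.
have rank_ge n : inv (s n) /\ (n <= rank (s n))%N.
  elim: n => [|n [inv_n le_n]]; first by [].
  have [inv_Sn lt_n] := step_rank _ _ inv_n (run n).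
  by split; last exact: leq_ltn_trans lt_n.
by have [_] := rank_ge N.+1; rewrite leqNgt ltnS rank_le.
Qed.

Section Oracle.
Variables (R : realType) (d m : nat) (A : 'M[R]_(m, d)) (b : 'I_m -> R).
Variable X : 'rV[R]_d -> Prop.
Hypothesis clconvXE : forall x, clconv X x <-> feasible A b x.

Lemma fresh_vertex V Rs pi pi0 t1 t2 nu :
  sep_lp_feasible V Rs pi pi0 t1 t2 -> pi0 < dotv pi nu ->
  {in V, forall v, is_vertex (clconv X) v} -> is_vertex (clconv X) nu ->
  tight A b nu \notin map (tight A b) V.
Proof.
move=> [V_cut _] nu_cut V_vert nu_vert; apply/mapP => -[v vV tight_nu].
have nu_v := vertex_eq_of_tight_eq clconvXE nu_vert (V_vert v vV) tight_nu.
by have := V_cut v vV; rewrite -nu_v subr_le0 leNgt nu_cut.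
Qed.

Lemma fresh_ray V Rs pi pi0 t1 t2 r :
  sep_lp_feasible V Rs pi pi0 t1 t2 -> 0 < dotv pi r -> (exists y, X y) ->
  {in Rs, forall r, is_extreme_ray (clconv X) r} -> is_extreme_ray (clconv X) r ->
  tight0 A r \notin map (tight0 A) Rs.
Proof.
move=> [_ [Rs_cut _]] r_cut [y Xy] Rs_rays r_ray.
apply/mapP => -[r' r'Rs /esym tight_r].
have clconvX_nonempty : exists x, clconv X x by exists y; apply: mem_clconv.
have [mu mu_ge0 r_mu] := extreme_ray_scale_of_tight_eq clconvXE clconvX_nonempty
  (Rs_rays r' r'Rs) r_ray tight_r.
by move: r_cut; rewrite r_mu dotvZr ltNge mulr_ge0_le0 ?Rs_cut.
Qed.

Variables (xbar : 'rV[R]_d) (eps : R) (V0 R0 : seq 'rV[R]_d) (c : option 'rV[R]_d).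
Hypothesis eps_gt0 : 0 < eps.
Hypothesis V0_vertices : {in V0, forall v, is_vertex (clconv X) v}.
Hypothesis R0_rays : {in R0, forall r, is_extreme_ray (clconv X) r}.

Definition loop_inv (V Rs : seq 'rV[R]_d) : Prop :=
  {in V, forall v, is_vertex (clconv X) v} /\
  {in Rs, forall r, is_extreme_ray (clconv X) r}.

Definition loop_size (V Rs : seq 'rV[R]_d) : nat :=
  (#|map (tight A b) V| + #|map (tight0 A) Rs|)%N.

Lemma loop_size_le V Rs : (loop_size V Rs <= 2 * #|{set 'I_m}|)%N.
Proof. by rewrite mul2n -addnn leq_add ?max_card. Qed.

Definition state_inv (st : sep_state R d) : Prop :=
  if st is SepLoop V Rs then loop_inv V Rs else True.

(* SepDone gets the top rank, so that every step, the final one included,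
   raises the rank. *)
Definition state_rank (st : sep_state R d) : nat :=
  match st with
  | SepInit => 0
  | SepLoop V Rs => (loop_size V Rs).+1
  | SepDone => (2 * #|{set 'I_m}|).+2
  end.

Lemma state_rank_le st : (state_rank st <= (2 * #|{set 'I_m}|).+2)%N.
Proof. by case: st => //= V Rs; rewrite ltnS leqW ?loop_size_le. Qed.

Lemma sep_step_rank x y :
  state_inv x -> sep_step X xbar eps V0 R0 c x y ->
  state_inv y /\ (state_rank x < state_rank y)%N.
Proof.
have loop_lt_done V Rs : ((loop_size V Rs).+1 < (2 * #|{set 'I_m}|).+2)%N.
  by rewrite !ltnS loop_size_le.
move=> + step; case: step => /=.
- by move=> _ _; split.
- by [].
- by [].
- by move=> *; split.
- by move=> *; split; last exact: loop_lt_done.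
- move=> V Rs pi pi0 t1 t2 r [feas _] _ unbounded r_ray r_cut [V_vert Rs_rays].
  have [z [Xz _]] := unbounded 0.
  split; first by split=> // r'; rewrite mem_rcons inE => /predU1P[->|/Rs_rays].
  have r_fresh := fresh_ray feas r_cut (ex_intro _ z Xz) Rs_rays r_ray.
  by rewrite ltnS /loop_size map_rcons card_rcons_notin ?addnS.
- by move=> *; split; last exact: loop_lt_done.
- move=> V Rs pi pi0 t1 t2 nu [feas _] gap nu_vert _ nu_ge [V_vert Rs_rays].
  have nu_cut : pi0 < dotv pi nu.
    move/negP: nu_ge; rewrite -leNgt; apply: lt_le_trans.
    by rewrite -subr_gt0 -dotvC (lt_trans eps_gt0 gap).
  split; first by split=> // v; rewrite mem_rcons inE => /predU1P[->|/V_vert].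
  have nu_fresh := fresh_vertex feas nu_cut V_vert nu_vert.
  by rewrite ltnS /loop_size map_rcons card_rcons_notin.
Qed.

End Oracle.

Theorem theorem3 (R : realType) (d : nat) (X : 'rV[R]_d -> Prop)
    (xbar : 'rV[R]_d) (eps : R) (V0 R0 : seq 'rV[R]_d) (c : option 'rV[R]_d) :
  0 < eps ->
  polyhedron (clconv X) ->
  (forall v, v \in V0 -> is_vertex (clconv X) v) ->
  (forall r, r \in R0 -> is_extreme_ray (clconv X) r) ->
  ~ (exists s : nat -> sep_state R d,
       s 0%N = SepInit R d /\
       forall n : nat, sep_step X xbar eps V0 R0 c (s n) (s n.+1)).
Proof.
move=> eps_gt0 [m [A [b clconvXE]]] V0_vertices R0_rays [s [s0 run]].
have inv0 : state_inv X (s 0%N) by rewrite s0.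
have step_rank := sep_step_rank (b := fun i => b i ord0) clconvXE
  (xbar := xbar) (c := c) eps_gt0 V0_vertices R0_rays.
exact: no_infinite_increasing_run step_rank (state_rank_le A _) _ inv0 run.
Qed.
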